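(* Let $D=(V,A)$ be a digraph with minimum dicut size $\tau$, and let $\vec G=(V,A\cup A^{-1})$ with weight $w^D$ be as in the context. For every integer $k\le\tau$, $D$ contains $k$ pairwise arc-disjoint dijoins if and only if $\vec G$ with weight $w^D$ can pack $k$ strongly connected digraphs, i.e. there exist arc subsets $F_1,\dots,F_k\subseteq A\cup A^{-1}$, each satisfying $\delta^+_{\vec G}(U)\cap F_i\neq\emptyset$ for all $\emptyset\neq U\subsetneq V$, such that every arc $e$ of $\vec G$ belongs to at most $w^D_e$ of the sets $F_i$.
   Context: Digraphs are finite and loopless; parallel arcs allowed. For $\emptyset\neq U\subsetneq V$, $\delta^+(U)$ / $\delta^-(U)$ denote arcs leaving/entering $U$. A dicut of $D$ is $\delta^+_D(U)$ with $\emptyset\neq U\subsetneq V$ and $\delta^-_D(U)=\emptyset$; a dijoin is an arc set meeting every dicut; ''$D$ has minimum dicut size $\tau$'' means $D$ has at least one dicut and the minimum number of arcs in a dicut is $\tau$. $A^{-1}$ denotes the set of reverses of the arcs of $A$ (one reverse arc $a^{-1}$ per arc $a\in A$, considered distinct from arcs of $A$). The digraph $\vec G$ has vertex set $V$ and arc set $A\cup A^{-1}$, and the weight $w^D$ is defined by $w^D_a=\tau$ for $a\in A$ and $w^D_{a^{-1}}=1$ for $a^{-1}\in A^{-1}$. *)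

From mathcomp Require Import all_boot.
Set Implicit Arguments. Unset Strict Implicit. Unset Printing Implicit Defensive.

(* A digraph D = (V, A): finite vertex type V, finite arc type A (parallel arcs
   allowed), with tail/head maps; loopless means tl a != hd a. *)

Definition delta_out_gen (V E : finType) (t h : E -> V) (U : {set V}) : {set E} :=
  [set a | (t a \in U) && (h a \notin U)].

Section Digraphs.
Variables (V Ar : finType) (tl hd : Ar -> V).

Definition loopless : Prop := forall a, tl a != hd a.

Definition delta_out (U : {set V}) : {set Ar} := delta_out_gen tl hd U.
Definition delta_in (U : {set V}) : {set Ar} :=
  [set a | (tl a \notin U) && (hd a \in U)].

Definition proper_nonempty (U : {set V}) : bool := (U != set0) && (U != setT).

Definition dicut_shore (U : {set V}) : bool :=
  proper_nonempty U && (delta_in U == set0).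

Definition is_dicut (C : {set Ar}) : Prop :=
  exists U, dicut_shore U /\ C = delta_out U.

Definition is_dijoin (J : {set Ar}) : Prop :=
  forall C, is_dicut C -> [exists a, (a \in J) && (a \in C)].

Definition min_dicut_size (tau : nat) : Prop :=
  (exists C, is_dicut C) /\
  (exists C, is_dicut C /\ #|C| = tau) /\
  (forall C, is_dicut C -> tau <= #|C|).

(* The digraph vec G on V with arcs A + A^{-1}: inl a = a, inr a = a^{-1}. *)
Definition vtl (e : Ar + Ar) : V := match e with inl a => tl a | inr a => hd a end.
Definition vhd (e : Ar + Ar) : V := match e with inl a => hd a | inr a => tl a end.

Definition wD (tau : nat) (e : Ar + Ar) : nat :=
  match e with inl _ => tau | inr _ => 1 end.

Definition meets_all_out_cuts (F : {set Ar + Ar}) : Prop :=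
  forall U : {set V}, proper_nonempty U ->
    [exists e, (e \in F) && (e \in delta_out_gen vtl vhd U)].

End Digraphs.

From mathcomp Require Import all_boot.
Set Implicit Arguments. Unset Strict Implicit. Unset Printing Implicit Defensive.

(* Pass from dijoins J_i to A + J_i^{-1}, and back by keeping the arcs whose
   reverse is chosen.  A cut delta^+(U) of vec G not met by A has no arc of D
   leaving U, so ~: U is a dicut shore and the reverses of that dicut lie in
   delta^+(U).  Weight tau on A absorbs the k <= tau copies of A, while weight 1
   on A^{-1} is exactly arc-disjointness. *)

Lemma card_family_le1P (I T : finType) (F : I -> {set T}) :
  (forall i j, i != j -> [disjoint F i & F j]) <->
  (forall x, #|[set i | x \in F i]| <= 1).
Proof.
split=> [disjF x | le1F i j neq_ij].
  rewrite leqNgt; apply/negP=> /card_gt1P [i [j [Fi Fj neq_ij]]].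
  by rewrite !inE in Fi Fj; rewrite (disjointFr (disjF i j neq_ij) Fi) in Fj.
rewrite disjoints_subset; apply/subsetP=> x Fix; rewrite inE; apply/negP=> Fjx.
have := le1F x; rewrite leqNgt => /negP; apply.
by apply/card_gt1P; exists i, j; rewrite !inE.
Qed.

Lemma proper_nonemptyC (V : finType) (U : {set V}) :
  proper_nonempty U -> proper_nonempty (~: U).
Proof.
case/andP=> U_neq0 U_neqT; apply/andP; split.
  by apply: contra U_neqT => /eqP UC0; rewrite -(setCK U) UC0 setC0.
by apply: contra U_neq0 => /eqP UCT; rewrite -(setCK U) UCT setCT.
Qed.

Section ReversedArcs.
Variables (V Ar : finType) (tl hd : Ar -> V).

Lemma delta_inC (U : {set V}) : delta_in tl hd (~: U) = delta_out tl hd U.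
Proof. by apply/setP=> a; rewrite !inE negbK andbC. Qed.

Lemma forward_in_delta_out (U : {set V}) (a : Ar) :
  (inl a \in delta_out_gen (vtl tl hd) (vhd tl hd) U) = (a \in delta_out tl hd U).
Proof. by rewrite !inE. Qed.

Lemma reverse_in_delta_out (U : {set V}) (a : Ar) :
  (inr a \in delta_out_gen (vtl tl hd) (vhd tl hd) U) = (a \in delta_in tl hd U).
Proof. by rewrite !inE andbC. Qed.

Lemma dicut_shoreC (U : {set V}) :
  proper_nonempty U -> delta_out tl hd U = set0 -> dicut_shore tl hd (~: U).
Proof.
by move=> U_pn out0; rewrite /dicut_shore proper_nonemptyC //= delta_inC out0.
Qed.

Definition add_reversed (J : {set Ar}) : {set Ar + Ar} :=
  [set e | if e is inr a then a \in J else true].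

Definition reversed_part (F : {set Ar + Ar}) : {set Ar} := [set a | inr a \in F].

Lemma add_reversed_meets_all_out_cuts (J : {set Ar}) :
  is_dijoin tl hd J -> meets_all_out_cuts tl hd (add_reversed J).
Proof.
move=> dijJ U U_pn.
have [out0|[a out_a]] := set_0Vmem (delta_out tl hd U); last first.
  by apply/existsP; exists (inl a); rewrite inE forward_in_delta_out out_a.
have dicutC : is_dicut tl hd (delta_out tl hd (~: U)).
  by exists (~: U); split; first exact: dicut_shoreC.
have /existsP [a /andP [Ja cut_a]] := dijJ _ dicutC.
apply/existsP; exists (inr a).
by rewrite inE Ja reverse_in_delta_out -[U]setCK delta_inC.
Qed.

Lemma reversed_part_dijoin (F : {set Ar + Ar}) :
  meets_all_out_cuts tl hd F -> is_dijoin tl hd (reversed_part F).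
Proof.
move=> meetF _ [U [/andP [U_pn /eqP in0] ->]].
have /existsP [[a|a] /andP [Fe cut_e]] := meetF _ (proper_nonemptyC U_pn).
  by move: cut_e; rewrite forward_in_delta_out -delta_inC setCK in0 inE.
apply/existsP; exists a.
by rewrite inE Fe -delta_inC -reverse_in_delta_out.
Qed.

End ReversedArcs.

Theorem proposition2 (V Ar : finType) (tl hd : Ar -> V) (tau : nat) :
  loopless tl hd ->
  min_dicut_size tl hd tau ->
  forall k : nat, k <= tau ->
  ((exists J : 'I_k -> {set Ar},
      (forall i, is_dijoin tl hd (J i)) /\
      (forall i j, i != j -> [disjoint J i & J j]))
   <->
   (exists F : 'I_k -> {set Ar + Ar},
      (forall i, meets_all_out_cuts tl hd (F i)) /\
      (forall e : Ar + Ar, #|[set i | e \in F i]| <= wD tau e))).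
Proof.
(* Looplessness and the value of tau are not needed, only k <= tau. *)
move=> _ _ k le_k_tau; split.
- case=> J [dijJ /card_family_le1P disjJ].
  exists (fun i => add_reversed (J i)); split=> [i|].
    exact: add_reversed_meets_all_out_cuts.
  case=> [a|a] /=.
    by rewrite (leq_trans (max_card _)) ?card_ord.
  by under eq_finset do rewrite inE; apply: disjJ.
- case=> F [meetF loadF].
  exists (fun i => reversed_part (F i)); split=> [i|].
    exact: reversed_part_dijoin.
  apply/card_family_le1P=> a.
  by under eq_finset do rewrite inE; apply: loadF (inr a).
Qed.
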